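(* For every $M\in\mathbb N$, every prime power $q$ and every $\varepsilon>0$, for almost all $a\in(\mathbb F_q^M)^\infty$ (uniform product measure), $$-\varepsilon<\liminf_{n\to\infty}\frac{d_a(n)}{n}\le\limsup_{n\to\infty}\frac{d_a(n)}{n}<\varepsilon.$$
   Context: Let $q$ be a prime power and $M\ge1$. For $a=(a_{k,m})_{k\ge1,\,1\le m\le M}\in(\mathbb F_q^M)^\infty$ and $n\in\mathbb N_0$, $L_a(n)$ is the least $L\ge0$ such that there exist $c_1,\dots,c_L\in\mathbb F_q$ with $a_{k,m}=\sum_{i=1}^L c_i a_{k-i,m}$ for all $L<k\le n$ and all $1\le m\le M$; $L_a(0)=0$. The linear complexity deviation is $d_a(n)=L_a(n)-\lceil nM/(M+1)\rceil$. *)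

From mathcomp Require Import all_boot all_order all_algebra all_field.
From mathcomp Require Import all_classical all_reals.
From mathcomp Require Import topology normedtype sequences.
Set Implicit Arguments. Unset Strict Implicit. Unset Printing Implicit Defensive.
Import Order.TTheory GRing.Theory Num.Theory.

(* A sequence a in (F^M)^oo is a function  a : nat -> {ffun 'I_M -> F},
   where  a k  represents the paper's a_{k+1} (the paper indexes from 1).
   [entry a k m] is the paper's a_{k,m} for k >= 1. *)
Definition entry (F : finFieldType) (M : nat)
  (a : nat -> {ffun 'I_M -> F}) (k : nat) (m : 'I_M) : F := a k.-1 m.

Definition lin_rec (F : finFieldType) (M : nat)
  (a : nat -> {ffun 'I_M -> F}) (n L : nat) : Prop :=
  exists c : 'I_L -> F, forall k : nat, (L < k <= n)%N -> forall m : 'I_M,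
    entry a k m = (\sum_(i < L) c i * entry a (k - i.+1) m)%R.

(* L = n is always admissible (vacuous condition). *)
Lemma lin_rec_n (F : finFieldType) (M : nat) (a : nat -> {ffun 'I_M -> F})
  (n : nat) : exists L, `[< lin_rec a n L >].
Proof.
exists n; apply/asboolP; exists (fun _ => 0%R) => k /andP [Hk1 Hk2].
by exfalso; move: (leq_trans Hk1 Hk2); rewrite ltnn.
Qed.

Definition lin_compl (F : finFieldType) (M : nat)
  (a : nat -> {ffun 'I_M -> F}) (n : nat) : nat :=
  ex_minn (lin_rec_n a n).

Definition ceil_div (x y : nat) : nat := (x + y.-1) %/ y.

Definition lin_dev (F : finFieldType) (M : nat)
  (a : nat -> {ffun 'I_M -> F}) (n : nat) : int :=
  (Posz (lin_compl a n) - Posz (ceil_div (n * M) M.+1))%R.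

Definition cylinder (F : finFieldType) (M : nat) (w : seq {ffun 'I_M -> F})
  (a : nat -> {ffun 'I_M -> F}) : Prop :=
  forall k, (k < size w)%N -> a k = nth (a k) w k.

(* Null set for the uniform product measure on (F^M)^oo: for every delta > 0
   it can be covered by countably many cylinders of total measure <= delta,
   the cylinder of prefix w having measure (q^M)^(-|w|).  This is exactly
   "outer measure zero" for the product measure (Caratheodory extension of
   the cylinder premeasure). *)
Definition prod_null (R : realType) (F : finFieldType) (M : nat)
  (S : (nat -> {ffun 'I_M -> F}) -> Prop) : Prop :=
  forall delta : R, (0 < delta)%R ->
    exists w : nat -> seq {ffun 'I_M -> F},
      (forall a, S a -> exists i, cylinder (w i) a) /\
      (forall N, (\sum_(i < N) ((#|F| ^ M)%:R ^- size (w i)) <= delta)%R).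

Definition prod_ae (R : realType) (F : finFieldType) (M : nat)
  (P : (nat -> {ffun 'I_M -> F}) -> Prop) : Prop :=
  prod_null R (fun a => ~ P a).

(* Write Q = #|F| and C = ceil(nM/(M+1)).  If L_a(n) > C + e, the recurrence
   of order C + e has no solution on the first n terms, so a nonzero vector
   annihilates the (n - C - e)M x (C + e) matrix of its coefficients, and at a
   pivot of that vector a window of C + e letters of the prefix is determined
   by the other letters.  If L_a(n) + e < C, the prefix obeys a recurrence of
   order C - e - 1 and is determined by its coefficients and first letters.
   Hence at most 2 Q^(nM + M - e) prefixes of length n have |d_a(n)| > e.
   For e = n/t the cylinders of these prefixes have total mass O(Q^(-n/t)),
   a convergent series, so by the first Borel-Cantelli lemma almost every a
   has |d_a(n)| <= n/t for all large n; t > 2/eps gives the bounds. *)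

From mathcomp Require Import all_boot all_order all_algebra all_field.
From mathcomp Require Import all_classical all_reals.
From mathcomp Require Import topology normedtype sequences.
From mathcomp Require Import zify ring lra.
Import Order.TTheory GRing.Theory Num.Theory.
Set Implicit Arguments. Unset Strict Implicit.

Lemma card_bigcup_le (I T : finType) (A : I -> {set T}) :
  (#|\bigcup_i A i| <= \sum_i #|A i|)%N.
Proof.
elim/big_rec2: _ => [|i n U _ leUn]; first by rewrite cards0.
exact: leq_trans (leq_card_setU _ _) (leq_add _ leUn).
Qed.

Section LinearComplexity.
Variables (F : finFieldType) (M : nat).
Local Notation T := {ffun 'I_M -> F}.
Implicit Types (a b : nat -> T) (n L : nat).

Lemma eq_lin_rec a b n L :
  (forall k, (k < n)%N -> a k = b k) -> lin_rec a n L -> lin_rec b n L.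
Proof.
move=> eq_ab [c Hc]; exists c => k /andP[ltLk lekn] m.
rewrite /entry -eq_ab; last lia.
rewrite [LHS](Hc k) ?ltLk //; apply: eq_bigr => i _; rewrite /entry eq_ab //.
have := ltn_ord i; lia.
Qed.

Lemma eq_lin_compl a b n :
  (forall k, (k < n)%N -> a k = b k) -> lin_compl a n = lin_compl b n.
Proof.
move=> eq_ab; apply: eq_ex_minn => L; apply/asboolP/asboolP.
  exact: eq_lin_rec.
by apply: eq_lin_rec => k /eq_ab.
Qed.

Lemma lin_complP a n : lin_rec a n (lin_compl a n).
Proof. by rewrite /lin_compl; case: ex_minnP => L /asboolP. Qed.

Lemma lin_compl_min a n L : lin_rec a n L -> (lin_compl a n <= L)%N.
Proof. by move=> recL; rewrite /lin_compl; case: ex_minnP => L' _; apply; apply/asboolP. Qed.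

Lemma lin_compl_leq a n : (lin_compl a n <= n)%N.
Proof. by apply: lin_compl_min; exists (fun _ => 0%R) => k /andP[]; lia. Qed.

Lemma lin_rec_widen a n L L' : (L <= L')%N -> lin_rec a n L -> lin_rec a n L'.
Proof.
move=> leLL' [c Hc].
pose c' i := if insub i is Some i' then c i' else 0%R.
exists (fun i : 'I_L' => c' i) => k /andP[ltL'k lekn] m.
rewrite (Hc k) ?lekn ?andbT; last lia.
rewrite (eq_bigr (fun i : 'I_L => c' i * entry a (k - i.+1) m)%R); last first.
  by move=> i _; rewrite /c' valK.
rewrite (big_ord_widen L' (fun i => c' i * entry a (k - i.+1) m)%R leLL').
rewrite big_mkcond; apply: eq_bigr => i _ /=.
by case: ifP => // geLi; rewrite /c' insubF ?mul0r ?geLi.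
Qed.

End LinearComplexity.

Section Words.
Variables (F : finFieldType) (M : nat).
Local Notation T := {ffun 'I_M -> F}.
Local Notation word n := {ffun 'I_n -> T}.
Local Open Scope ring_scope.

Definition pad0 n (p : word n) (k : nat) : T :=
  if insub k is Some i then p i else 0.

Lemma pad0_lt n (p : word n) k (ltkn : (k < n)%N) : pad0 p k = p (Ordinal ltkn).
Proof. by rewrite /pad0 insubT. Qed.

Lemma pad0_ge n (p : word n) k : (n <= k)%N -> pad0 p k = 0.
Proof. by move=> lenk; rewrite /pad0 insubF // ltnNge lenk. Qed.

Lemma pad0_ord n (p : word n) (i : 'I_n) : pad0 p i = p i.
Proof. by rewrite /pad0 valK. Qed.

Lemma pad0B n (p1 p2 : word n) k : pad0 (p1 - p2) k = pad0 p1 k - pad0 p2 k.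
Proof. by rewrite /pad0; case: insub => [i|]; rewrite ?ffunE ?subrr. Qed.

Lemma eq_pad0 n (p1 p2 : word n) :
  (forall k, (k < n)%N -> pad0 p1 k = pad0 p2 k) -> p1 = p2.
Proof. by move=> eq_p; apply/ffunP => i; rewrite -!pad0_ord eq_p. Qed.

Definition take_word n (a : nat -> T) : word n := [ffun i : 'I_n => a i].

Definition word_seq n (p : word n) : seq T := [seq p i | i <- enum 'I_n].

Lemma pad0_take_word n a k : (k < n)%N -> pad0 (take_word n a) k = a k.
Proof. by move=> ltkn; rewrite (pad0_lt _ ltkn) ffunE. Qed.

Lemma lin_dev_take_word n a : lin_dev (pad0 (take_word n a)) n = lin_dev a n.
Proof. by rewrite /lin_dev (eq_lin_compl (b := a)) // => k /pad0_take_word. Qed.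

Lemma size_word_seq n (p : word n) : size (word_seq p) = n.
Proof. by rewrite size_map size_enum_ord. Qed.

Lemma cylinder_take_word n a : cylinder (word_seq (take_word n a)) a.
Proof.
move=> k; rewrite size_word_seq => ltkn.
rewrite (nth_map (Ordinal ltkn)) ?size_enum_ord //.
by rewrite (nth_ord_enum _ (Ordinal ltkn)) ffunE.
Qed.

Definition rec_by n L (c : {ffun 'I_L -> F}) (p : word n) : bool :=
  `[< forall k, (L < k <= n)%N -> forall m : 'I_M,
      entry (pad0 p) k m = \sum_(i < L) c i * entry (pad0 p) (k - i.+1) m >].

Lemma rec_by_inj n L (leLn : (L <= n)%N) (c : {ffun 'I_L -> F}) :
  {in [set p | rec_by c p] &, injective
     (fun p : word n => [ffun i : 'I_L => p (widen_ord leLn i)])}.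
Proof.
move=> p1 p2; rewrite !inE => /asboolP rec1 /asboolP rec2 /ffunP eq_init.
apply: eq_pad0 => k; elim/ltn_ind: k => k IHk ltkn.
have [ltkL|geLk] := ltnP k L.
  have := eq_init (Ordinal ltkL); rewrite !ffunE !(pad0_lt _ ltkn).
  by rewrite (_ : widen_ord _ _ = Ordinal ltkn) //; apply: val_inj.
apply/ffunP => m; have rangek : (L < k.+1 <= n)%N by apply/andP.
move: (rec1 _ rangek m) (rec2 _ rangek m); rewrite /entry /= => -> ->.
by apply: eq_bigr => i _; rewrite IHk //; have := ltn_ord i; lia.
Qed.

Lemma card_rec_by_le n L (leLn : (L <= n)%N) (c : {ffun 'I_L -> F}) :
  (#|[set p : word n | rec_by c p]| <= (#|F| ^ M) ^ L)%N.
Proof.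
rewrite -(card_in_imset (@rec_by_inj n L leLn c)).
by apply: leq_trans (max_card _) _; rewrite !card_ffun !card_ord.
Qed.

Lemma card_lin_rec_le n L : (L <= n)%N ->
  (#|[set p : word n | `[< lin_rec (pad0 p) n L >]]| <= #|F| ^ L * (#|F| ^ M) ^ L)%N.
Proof.
move=> leLn.
apply: leq_trans (_ : #|\bigcup_(c : {ffun 'I_L -> F}) [set p | rec_by c p]| <= _)%N.
  apply/subset_leq_card/fintype.subsetP => p; rewrite inE => /asboolP[c rec_c].
  apply/bigcupP; exists [ffun i => c i] => //; rewrite inE; apply/asboolP => k rangek m.
  by rewrite rec_c //; apply: eq_bigr => i _; rewrite ffunE.
apply: leq_trans (card_bigcup_le _) _.
apply: leq_trans (_ : \sum_(c : {ffun 'I_L -> F}) (#|F| ^ M) ^ L <= _)%N.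
  by apply: leq_sum => c _; apply: card_rec_by_le.
by rewrite sum_nat_const card_ffun !card_ord.
Qed.

Section NotRecurrent.
Variables (n L : nat).
Local Notation Ix := ('I_(n - L) * 'I_M)%type.

Definition rec_entry (p : word n) (y : Ix) (j : 'I_L) : F :=
  pad0 p (L + y.1 - j.+1) y.2.

Definition annihilates (lam : {ffun Ix -> F}) (p : word n) : bool :=
  [forall j, \sum_y lam y * rec_entry p y j == 0].

Lemma annihilator_of_not_lin_rec p :
  ~ lin_rec (pad0 p) n L -> exists2 lam, lam != 0 & annihilates lam p.
Proof.
move=> not_rec.
pose A : 'M[F]_(#|{: Ix}|, L) := \matrix_(x, j) rec_entry p (enum_val x) j.
have : ~~ row_free A.
  apply/negP => freeA; apply: not_rec.
  have fullAT : row_full A^T by rewrite /row_full mxrank_tr.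
  pose v : 'rV[F]_#|{: Ix}| := \row_x pad0 p (L + (enum_val x : Ix).1) (enum_val x : Ix).2.
  have /submxP[c vE] := submx_full v fullAT.
  exists (fun j => c 0 j) => k /andP[ltLk lekn] m.
  have ltr : (k - L - 1 < n - L)%N by lia.
  have := congr1 (fun B : 'M_(1, _) => B 0 (enum_rank (Ordinal ltr, m))) vE.
  rewrite !mxE enum_rankK /entry /= (_ : (L + (k - L - 1))%N = k.-1); last lia.
  move=> ->; apply: eq_bigr => j _; rewrite !mxE enum_rankK /rec_entry /=.
  by congr (_ * pad0 p _ m); have := ltn_ord j; lia.
rewrite -kermx_eq0 => /rowV0Pn[lam /sub_kermxP lamA lam0].
exists [ffun y => lam 0 (enum_rank y)].
  apply: contra lam0 => /eqP lam'0; apply/eqP/rowP => x.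
  by move/ffunP/(_ (enum_val x)): lam'0; rewrite !ffunE enum_valK mxE.
apply/forallP => j; have := congr1 (fun B : 'M_(1, L) => B 0 j) lamA.
rewrite !mxE (big_enum_val (A := {: Ix})) /= => lamA_j.
rewrite -[X in _ == X]lamA_j; apply/eqP/eq_bigr => x _.
by rewrite ffunE enum_valK mxE.
Qed.

Lemma annihilatesB lam p1 p2 :
  annihilates lam p1 -> annihilates lam p2 -> annihilates lam (p1 - p2).
Proof.
move=> /forallP ann1 /forallP ann2; apply/forallP => j.
rewrite (eq_bigr (fun y => lam y * rec_entry p1 y j - lam y * rec_entry p2 y j)).
  by rewrite sumrB (eqP (ann1 j)) (eqP (ann2 j)) subrr.
by move=> y _; rewrite /rec_entry pad0B !ffunE mulrBr.
Qed.

(* Triangularity: the first nonzero entry of D, at position i0 of the window,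
   is the only entry of D met by equation L + rs - i0 - 1, and it meets it
   through the pivot coefficient lam (rs, ms). *)
Lemma annihilated_window_eq0 (lam : {ffun Ix -> F}) (rs : 'I_(n - L)) (ms : 'I_M)
    (D : word n) :
  lam (rs, ms) != 0 -> (forall r, lam (r, ms) != 0 -> (r <= rs)%N) ->
  (forall k m, pad0 D k m != 0 -> m = ms /\ (rs <= k < rs + L)%N) ->
  annihilates lam D -> D = 0.
Proof.
move=> lam_rs max_rs suppD /forallP annD.
apply/ffunP => i; apply/ffunP => m; rewrite !ffunE -pad0_ord.
apply/eqP/negPn/negP => Dim.
have exD : exists k, pad0 D k ms != 0 by exists i; have [<-] := suppD _ _ Dim.
case: (ex_minnP exD) => i0 Di0 min_i0; have [_ /andP[rs_i0 i0_rs]] := suppD _ _ Di0.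
have ltj : (L + rs - i0 - 1 < L)%N by lia.
move/eqP: (annD (Ordinal ltj)); rewrite (bigD1 (rs, ms)) //= big1 ?addr0.
  rewrite /rec_entry /= (_ : (L + rs - (L + rs - i0 - 1).+1)%N = i0); last lia.
  by apply/eqP; rewrite mulf_neq0.
move=> [r m'] /= ne_y; rewrite /rec_entry /=.
have [->|lam_y] := eqVneq (lam (r, m')) 0; first by rewrite mul0r.
set k := (L + r - _)%N.
have [->|Dk] := eqVneq (pad0 D k m') 0; first by rewrite mulr0.
have [ms_m' _] := suppD _ _ Dk; rewrite ms_m' in lam_y Dk ne_y.
have := min_i0 _ Dk; have := max_rs _ lam_y; rewrite /k => le_r le_i0.
by case/negP: ne_y; apply/eqP; congr pair; apply: val_inj => /=; lia.
Qed.

(* With (rs, ms) the last nonzero coefficient of lam in column ms, the L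
   letters at positions rs, ..., rs + L - 1 of row ms are determined by the
   other letters of an annihilated word. *)
Lemma card_annihilated_le (lam : {ffun Ix -> F}) : lam != 0 ->
  (#|[set p : word n | annihilates lam p]| <= #|F| ^ (n * M - L))%N.
Proof.
move=> lam0.
have [[r0 ms] /= lam_r0] : exists y, lam y != 0.
  apply/existsP; apply: contraR lam0 => /existsPn lam0.
  by apply/eqP/ffunP => y; rewrite ffunE; apply/eqP/negPn.
have [rs lam_rs max_rs] := @arg_maxnP _ r0 (fun r => lam (r, ms) != 0) val lam_r0.
have ltn_win (j : 'I_L) : (rs + j < n)%N by have := ltn_ord rs; have := ltn_ord j; lia.
pose S := [set (Ordinal (ltn_win j), ms) | j : 'I_L].
have cardS : #|S| = L.
  rewrite card_imset ?card_ord // => j1 j2 /(congr1 (fun y => val y.1)) /= /eqP.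
  by rewrite eqn_add2l => /eqP; apply: val_inj.
pose off_window (p : word n) : {ffun 'I_n * 'I_M -> F} :=
  [ffun y => if y \in S then 0 else p y.1 y.2].
have inj : {in [set p | annihilates lam p] &, injective off_window}.
  move=> p1 p2; rewrite !inE => ann1 ann2 eq12; apply/eqP; rewrite -subr_eq0; apply/eqP.
  apply: (annihilated_window_eq0 lam_rs max_rs _ (annihilatesB ann1 ann2)) => k m.
  have [ltkn|?] := ltnP k n; last by rewrite pad0_ge ?ffunE ?eqxx.
  rewrite (pad0_lt _ ltkn) !ffunE subr_eq0.
  case: (boolP ((Ordinal ltkn, m) \in S)) => [/imsetP[j _ [kE ->]] _ | notS].
    by split=> //; have := ltn_ord j; lia.
  move/ffunP/(_ (Ordinal ltkn, m)): eq12.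
  by rewrite !ffunE (negbTE notS) => ->; rewrite eqxx.
rewrite -(card_in_imset inj).
apply: (@leq_trans #|pffun_on (0 : F) (~: S) predT|).
  apply/subset_leq_card/fintype.subsetP => _ /imsetP[p _ ->].
  apply/pffun_onP; split=> // /=; apply/fintype.subsetP => y.
  by rewrite !inE ffunE; case: (y \in S); rewrite ?eqxx.
have := cardsC S; rewrite card_pffun_on cardS card_prod !card_ord => cardCS.
by rewrite (_ : #|~: S| = n * M - L)%N //; lia.
Qed.

Lemma card_not_lin_rec_le :
  (#|[set p : word n | ~~ `[< lin_rec (pad0 p) n L >]]|
     <= #|F| ^ ((n - L) * M) * #|F| ^ (n * M - L))%N.
Proof.
apply: (@leq_trans #|\bigcup_(lam : {ffun Ix -> F})
    [set p : word n | (lam != 0) && annihilates lam p]|).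
  apply/subset_leq_card/fintype.subsetP => p; rewrite inE => /asboolPn not_rec.
  have [lam lam0 ann] := annihilator_of_not_lin_rec not_rec.
  by apply/bigcupP; exists lam; rewrite // inE lam0.
apply: leq_trans (card_bigcup_le _) _.
apply: leq_trans (_ : \sum_(lam : {ffun Ix -> F}) #|F| ^ (n * M - L) <= _)%N.
  apply: leq_sum => lam _; have [->|lam0] := eqVneq lam 0.
    by rewrite (_ : [set _ | _] = finset.set0) ?cards0 //;
      apply/setP => p; rewrite !inE eqxx.
  apply: leq_trans (card_annihilated_le lam0).
  by apply/subset_leq_card/fintype.subsetP => p; rewrite !inE => /andP[].
by rewrite sum_nat_const card_ffun card_prod !card_ord.
Qed.

End NotRecurrent.
End Words.

Lemma ceil_div_mul_leq x y : (ceil_div x y * y <= x + y.-1)%N.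
Proof. exact: leq_trunc_div. Qed.

Lemma leq_ceil_div_mul x y : (0 < y)%N -> (x <= ceil_div x y * y)%N.
Proof. by move=> y0; have := @ltn_ceil (x + y.-1) y y0; rewrite /ceil_div; lia. Qed.

Lemma card_finField_gt1 (F : finFieldType) : (1 < #|F|)%N.
Proof. by apply/card_gt1P; exists 0%R, 1%R; rewrite eq_sym oner_neq0. Qed.

Section Deviation.
Variables (F : finFieldType) (M : nat).
Hypothesis M_gt0 : (0 < M)%N.
Local Notation T := {ffun 'I_M -> F}.
Local Notation word n := {ffun 'I_n -> T}.
Local Notation Q := #|F|.
Local Notation ceilM n := (ceil_div (n * M) M.+1).

Lemma card_lin_compl_gt_le n e :
  (#|[set p : word n | ceilM n + e < lin_compl (pad0 p) n]| * Q ^ e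
     <= Q ^ (n * M + M))%N.
Proof.
have [ltLn|geLn] := ltnP (ceilM n + e) n; last first.
  rewrite (_ : [set _ | _] = finset.set0) ?cards0 //; apply/setP => p.
  by rewrite !inE; have := lin_compl_leq (pad0 p) n; lia.
apply: leq_trans (_ : Q ^ ((n - (ceilM n + e)) * M) * Q ^ (n * M - (ceilM n + e))
                       * Q ^ e <= _)%N.
  rewrite leq_mul2r; apply/orP; right.
  apply: leq_trans (card_not_lin_rec_le F M n (ceilM n + e)).
  apply/subset_leq_card/fintype.subsetP => p; rewrite !inE => ltLp.
  by apply/asboolPn => /lin_compl_min; lia.
have Q_gt0 := ltnW (card_finField_gt1 F).
have := leq_ceil_div_mul (n * M) (ltn0Sn M); rewrite mulnS => geCM.
have eM := leq_pmulr e M_gt0; have nM := leq_pmulr n M_gt0.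
by rewrite -!expnD leq_pexp2l // mulnBl mulnDl; lia.
Qed.

Lemma card_lin_compl_lt_le n e :
  (#|[set p : word n | lin_compl (pad0 p) n + e < ceilM n]| * Q ^ e
     <= Q ^ (n * M + M))%N.
Proof.
have [leCe|ltCe] := leqP (ceilM n) e.
  by rewrite (_ : [set _ | _] = finset.set0) ?cards0 //;
    apply/setP => p; rewrite !inE; lia.
have := ceil_div_mul_leq (n * M) M.+1 => /= leCM.
have leLn : (ceilM n - e.+1 <= n)%N by nia.
apply: leq_trans (_ : Q ^ (ceilM n - e.+1) * (Q ^ M) ^ (ceilM n - e.+1) * Q ^ e <= _)%N.
  rewrite leq_mul2r; apply/orP; right.
  apply: leq_trans (card_lin_rec_le F M leLn).
  apply/subset_leq_card/fintype.subsetP => p; rewrite !inE => ltpL.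
  by apply: (lin_rec_widen _ (lin_complP _ _)); lia.
have Q_gt0 := ltnW (card_finField_gt1 F).
by rewrite -expnM -!expnD leq_pexp2l //; nia.
Qed.

Definition deviant t n (p : word n) : bool := (n < t * `|lin_dev (pad0 p) n|)%N.

Lemma card_deviant_le t n : (0 < t)%N ->
  (#|[set p : word n | deviant t p]| * Q ^ (n %/ t) <= 2 * Q ^ (n * M + M))%N.
Proof.
move=> t_gt0.
apply: leq_trans (_ : #|[set p : word n | ceilM n + n %/ t < lin_compl (pad0 p) n] :|:
    [set p | lin_compl (pad0 p) n + n %/ t < ceilM n]| * Q ^ (n %/ t) <= _)%N.
  rewrite leq_mul2r; apply/orP; right; apply/subset_leq_card/fintype.subsetP => p.
  rewrite !inE /deviant /lin_dev => dev_p; have := leq_trunc_div n t.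
  case: (leqP (ceilM n) (lin_compl (pad0 p) n)) dev_p => [/distnEl|/ltnW/distnEr] ->.
    by nia.
  by nia.
apply: leq_trans (leq_mul (leq_card_setU _ _) (leqnn _)) _.
by rewrite mulnDl mul2n -addnn leq_add ?card_lin_compl_gt_le ?card_lin_compl_lt_le.
Qed.

End Deviation.

Local Open Scope ring_scope.

Lemma sumr_uniq_sub_le (R : numDomainType) (I : eqType) (s s' : seq I) (G : I -> R) :
  uniq s -> uniq s' -> {subset s <= s'} -> (forall i, 0 <= G i) ->
  \sum_(i <- s) G i <= \sum_(i <- s') G i.
Proof.
move=> uniq_s uniq_s' sub_ss' G_ge0.
have perm_s : perm_eq s [seq i <- s' | i \in s].
  apply: uniq_perm; rewrite ?filter_uniq // => i.
  by rewrite mem_filter; case: (boolP (i \in s)) => // /sub_ss'.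
rewrite (perm_big _ perm_s) big_filter [X in _ <= X](bigID (mem s)) /=.
by rewrite lerDl sumr_ge0.
Qed.

(* Summing along the enumeration of a countable disjoint union only meets
   finitely many fibers, each at most once. *)
Lemma sum_pickle_inv_le (R : numDomainType) (T_ : nat -> finType)
    (g : forall n, T_ n -> R) N :
  (forall n p, 0 <= g n p) ->
  exists Nmax, \sum_(i < N) oapp (fun y => g (tag y) (tagged y)) 0
                   (@pickle_inv {n : nat & T_ n} i)
               <= \sum_(n < Nmax) \sum_(p : T_ n) g n p.
Proof.
move=> g_ge0; pose s := pmap (@pickle_inv {n : nat & T_ n}) (index_iota 0 N).
exists (\max_(y <- s) tag y).+1.
rewrite -(big_mkord xpredT (fun i => oapp _ 0 (pickle_inv i))) -big_pmap.
rewrite -(big_mkord xpredT (fun n => \sum_(p : T_ n) g n p)).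
rewrite -(big_allpairs_dep (h := fun n (p : T_ n) => Tagged T_ p)
  (F := fun y => g (tag y) (tagged y))).
apply: sumr_uniq_sub_le => [||y y_s|y]; rewrite ?g_ge0 //.
- exact/pmap_uniq/iota_uniq/pickle_invK.
- apply: allpairs_uniq_dep => [||y1 y2 _ _]; rewrite ?iota_uniq // ?taggedK //.
  by move=> n _; apply: index_enum_uniq.
rewrite -[y]taggedK; apply: allpairs_f_dep => //.
by rewrite mem_iota add0n ltnS (leq_bigmax_seq y y_s).
Qed.

Section HalfPowers.
Variable R : realType.
Local Notation x := (2^-1 : R).

Lemma halfX_ge0 k : 0 <= x ^+ k.
Proof. by rewrite exprn_ge0 ?invr_ge0. Qed.

Lemma sum_halfX_le N : \sum_(i < N) x ^+ i <= 2.
Proof.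
have x_gt0 : 0 < x by rewrite invr_gt0.
have x_lt1 : `|x| < 1 by rewrite ger0_norm ?invf_lt1 ?ltr1n // ltW.
have := geometric_le_lim N ler01 x_gt0 x_lt1.
rewrite seriesEnat /= big_mkord (_ : 1 - x = x) ?div1r ?invrK; last first.
  by rewrite {1}(splitr 1) div1r addrK.
by rewrite (eq_bigr _ (fun (i : 'I_N) _ => mul1r (x ^+ i))).
Qed.

Lemma sum_halfX_div_mul t K : (0 < t)%N ->
  \sum_(0 <= n < t * K) x ^+ (n %/ t) = t%:R * \sum_(j < K) x ^+ j.
Proof.
move=> t_gt0; elim: K => [|K IHK]; first by rewrite muln0 big_geq // big_ord0 mulr0.
rewrite mulnS addnC (big_cat_nat (n := t * K)) ?leq_addr //= IHK big_ord_recr /=.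
rewrite mulrDr -{1}[(t * K)%N]add0n big_addn addKn; congr (_ + _).
rewrite (eq_big_nat _ _ (F2 := fun => x ^+ K)) ?sumr_const_nat ?subn0 ?mulr_natl //.
by move=> i /andP[_ ltit]; rewrite addnC mulnC divnMDl // divn_small ?addn0.
Qed.

Lemma sum_halfX_div_le t N : (0 < t)%N -> \sum_(0 <= n < N) x ^+ (n %/ t) <= 2 * t%:R.
Proof.
move=> t_gt0; apply: le_trans (_ : \sum_(0 <= n < t * N) x ^+ (n %/ t) <= _).
  rewrite [X in _ <= X](big_cat_nat (n := N)) ?leq_pmull //= lerDl.
  by apply: sumr_ge0 => i _; apply: halfX_ge0.
by rewrite sum_halfX_div_mul // mulrC ler_wpM2r ?ler0n ?sum_halfX_le.
Qed.

Lemma sum_halfX_div_tail_le t J N : (0 < t)%N ->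
  \sum_(t * J <= n < N) x ^+ (n %/ t) <= x ^+ J * (2 * t%:R).
Proof.
move=> t_gt0; have [leNtJ|ltJN] := leqP N (t * J).
  by rewrite big_geq // mulr_ge0 ?halfX_ge0 ?mulr_ge0 ?ler0n.
rewrite -{1}[(t * J)%N]add0n big_addn.
rewrite (eq_big_nat _ _ (F2 := fun i => x ^+ J * x ^+ (i %/ t))); last first.
  by move=> i _; rewrite -exprD addnC mulnC divnMDl.
by rewrite -mulr_sumr ler_wpM2l ?halfX_ge0 ?sum_halfX_div_le.
Qed.

Lemma exists_halfX_le (c : R) : 0 < c -> exists J, x ^+ J <= c.
Proof.
move=> c_gt0; exists (Num.truncn c^-1).
have lt_c : c^-1 < 2 ^+ Num.truncn c^-1.
  apply: lt_le_trans (truncnS_gt _) _; rewrite -natrX ler_nat.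
  exact: ltn_expl.
rewrite exprVn -div1r ler_pdivrMr ?exprn_gt0 // mulrC -ler_pdivrMr // div1r.
exact: ltW.
Qed.

Lemma invX_le_halfX (q : R) k : 2 <= q -> q ^- k <= x ^+ k.
Proof.
move=> q_ge2; rewrite -exprVn lerXn2r ?nnegrE ?invr_ge0 //; try lra.
by rewrite lef_pV2 ?posrE //; lra.
Qed.

End HalfPowers.

Lemma limn_esup_le_eventually (R : realType) (u : (\bar R)^nat) (c : \bar R) N :
  (forall n, (N <= n)%N -> (u n <= c)%E) -> (limn_esup u <= c)%E.
Proof.
move=> le_uc; rewrite limn_esup_lim; apply: lime_le; first exact: is_cvg_esups.
near=> m; apply: ereal.ge_ereal_sup => _ [k /= mk <-]; apply: le_uc.
by apply: leq_trans mk; near: m; exists N.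
Unshelve. all: by end_near. Qed.

Lemma ratio_limits_within (R : realType) (d : nat -> int) (t : nat) (eps : R) N :
  0 < eps -> 2 <= eps * t%:R ->
  (forall n, (N <= n)%N -> (t * `|d n| <= n)%N) ->
  ((- eps)%:E < limn_einf (fun n => ((d n)%:~R / n%:R : R)%:E))%E /\
    (limn_einf (fun n => ((d n)%:~R / n%:R : R)%:E)
       <= limn_esup (fun n => ((d n)%:~R / n%:R : R)%:E))%E /\
    (limn_esup (fun n => ((d n)%:~R / n%:R : R)%:E) < eps%:E)%E.
Proof.
move=> eps_gt0 eps_t le_dn.
have ratio_le n : (N.+1 <= n)%N -> `|(d n)%:~R / n%:R : R| <= eps / 2.
  move=> ltNn; have n_gt0 : (0 : R) < n%:R by rewrite ltr0n; lia.
  rewrite normrM normfV normr_nat ler_pdivrMr // -intr_norm -natr_absz.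
  have := le_dn n (ltnW ltNn); rewrite -(ler_nat R) natrM.
  have : (0 : R) <= `|d n|%:R by [].
  have : (0 : R) <= t%:R by [].
  set D := (`|d n|%:R : R); set tR := (t%:R : R) in eps_t *; nra.
have le_sup : (limn_esup (fun n => ((d n)%:~R / n%:R : R)%:E) <= (eps / 2)%:E)%E.
  apply: (limn_esup_le_eventually (N := N.+1)) => n /ratio_le.
  by rewrite lee_fin; apply: le_trans (ler_norm _).
have le_supN : (limn_esup (\- (fun n => ((d n)%:~R / n%:R : R)%:E)) <= (eps / 2)%:E)%E.
  apply: (limn_esup_le_eventually (N := N.+1)) => n /ratio_le.
  by rewrite /= lee_fin -normrN; apply: le_trans (ler_norm _).
split; last split.
- by rewrite /limn_einf lteNr /= (le_lt_trans le_supN) // lte_fin; lra.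
- exact: limn_einf_sup.
- by rewrite (le_lt_trans le_sup) // lte_fin; lra.
Qed.

Section BorelCantelli.
Variables (R : realType) (F : finFieldType) (M : nat).
Hypothesis M_gt0 : (0 < M)%N.
Local Notation T := {ffun 'I_M -> F}.
Local Notation word n := {ffun 'I_n -> T}.
Local Notation QM := ((#|F| ^ M)%:R : R).
Local Notation x := (2^-1 : R).

Lemma QM_ge2 : 2 <= QM.
Proof.
have Q_gt1 := card_finField_gt1 F.
by rewrite ler_nat (leq_trans Q_gt1) // -{1}[#|F|]expn1 leq_pexp2l // ltnW.
Qed.

Lemma deviant_mass_le t n : (0 < t)%N ->
  #|[set p : word n | deviant t p]|%:R * QM ^- n <= 2 * QM * x ^+ (n %/ t).
Proof.
move=> t_gt0; have Q_gt1 := card_finField_gt1 F.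
have Q_ge2 : (2 : R) <= #|F|%:R by rewrite ler_nat.
have Q_gt0 := ltnW Q_gt1.
apply: le_trans (_ : _ <= 2 * QM * #|F|%:R ^- (n %/ t)) _; last first.
  by rewrite ler_wpM2l ?invX_le_halfX // mulr_ge0 ?ler0n.
have := card_deviant_le F M_gt0 n t_gt0.
rewrite -(ler_nat R) !natrM !natrX => card_le.
rewrite -exprM ler_pdivrMr ?exprn_gt0 ?ltr0n //.
rewrite mulrAC ler_pdivlMr ?exprn_gt0 ?ltr0n //.
apply: le_trans card_le _; rewrite exprD mulnC.
by rewrite le_eqVlt; apply/orP; left; apply/eqP; ring.
Qed.

Lemma deviant_tail_small t : (0 < t)%N ->
  forall delta : R, 0 < delta -> exists N0, forall N,
    \sum_(N0 <= n < N) #|[set p : word n | deviant t p]|%:R * QM ^- n <= delta.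
Proof.
move=> t_gt0 delta delta_gt0; have QM_gt0 : 0 < QM by apply: lt_le_trans QM_ge2.
have [J halfJ] : exists J, x ^+ J <= delta / (4 * QM * t%:R).
  by apply: exists_halfX_le; rewrite divr_gt0 // !mulr_gt0 // ltr0n.
exists (t * J)%N => N.
apply: le_trans (_ : \sum_(t * J <= n < N) 2 * QM * x ^+ (n %/ t) <= _).
  by apply: ler_sum_nat => n _; apply: deviant_mass_le.
rewrite -mulr_sumr; apply: le_trans (_ : 2 * QM * (x ^+ J * (2 * t%:R)) <= _).
  by rewrite ler_wpM2l ?mulr_ge0 ?ler0n ?sum_halfX_div_tail_le // ltW.
rewrite (_ : _ * _ = x ^+ J * (4 * QM * t%:R)); last by ring.
by rewrite -ler_pdivlMr // !mulr_gt0 // ltr0n.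
Qed.

(* First Borel-Cantelli lemma for the cylinder covers of [prod_null]: the
   words of B n, for n beyond a tail of small total mass, are listed along the
   enumeration of the countable type of all words; the other indices carry
   cylinders of geometrically decreasing mass. *)
Lemma prod_null_io_prefix (B : forall n, {set word n}) (S : (nat -> T) -> Prop) :
  (forall delta : R, 0 < delta -> exists N0, forall N,
     \sum_(N0 <= n < N) #|B n|%:R * QM ^- n <= delta) ->
  (forall a, S a -> forall N, exists2 n, (N <= n)%N & take_word n a \in B n) ->
  prod_null R S.
Proof.
move=> tail_small io_S delta delta_gt0.
have [N0 tailN0] := tail_small (delta / 2) (divr_gt0 delta_gt0 (ltr0Sn _ _)).
have [K halfK] : exists K, x ^+ K <= delta / 4.
  by apply: exists_halfX_le; rewrite divr_gt0.
pose listed (y : {n : nat & word n}) := (N0 <= tag y)%N && (tagged y \in B (tag y)).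
pose w i := if pickle_inv i is Some y then
              if listed y then word_seq (tagged y) else nseq (i + K) 0
            else nseq (i + K) 0.
exists w; split.
  move=> a /io_S/(_ N0)[n leN0n Bn_a].
  exists (pickle (Tagged (fun n => word n) (take_word n a))).
  by rewrite /w pickleK_inv /listed /= leN0n Bn_a; apply: cylinder_take_word.
move=> N.
pose g n (p : word n) : R := if (N0 <= n)%N && (p \in B n) then QM ^- n else 0.
have g_ge0 n (p : word n) : 0 <= g n p.
  by rewrite /g; case: ifP; rewrite ?invr_ge0 ?exprn_ge0 ?ler0n.
have mass_w i : QM ^- size (w i) <= x ^+ (i + K)
    + oapp (fun y => g (tag y) (tagged y)) 0 (@pickle_inv {n : nat & word n} i).
  have pad_mass : QM ^- size (nseq (i + K) (0 : T)) <= x ^+ (i + K).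
    by rewrite size_nseq invX_le_halfX ?QM_ge2.
  rewrite /w /g /listed; case: pickle_inv => [y|] /=; last by rewrite addr0.
  by case: ifP => _; rewrite ?addr0 // size_word_seq lerDr halfX_ge0.
apply: le_trans (ler_sum _ (fun (i : 'I_N) _ => mass_w i)) _.
rewrite big_split /= [delta](splitr delta); apply: lerD.
  under eq_bigr do rewrite exprD mulrC.
  rewrite -mulr_sumr; apply: le_trans (_ : x ^+ K * 2 <= _).
    by rewrite ler_wpM2l ?halfX_ge0 ?sum_halfX_le.
  by move: halfK; lra.
have [Nmax le_Nmax] := sum_pickle_inv_le N g_ge0; apply: le_trans le_Nmax _.
rewrite (eq_bigr (fun n : 'I_Nmax => if (N0 <= n)%N then #|B n|%:R * QM ^- n else 0)).
  by rewrite -big_mkcond; move: (tailN0 Nmax); rewrite big_geq_mkord.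
move=> n _; rewrite /g; case: (N0 <= n)%N => /=; last by rewrite big1.
by rewrite -big_mkcond sumr_const mulr_natl.
Qed.

End BorelCantelli.

Theorem mainTheorem15 (R : realType) (F : finFieldType) (M : nat)
  (HM : (0 < M)%N) (eps : R) (Heps : (0 < eps)%R) :
  prod_ae R (fun a : nat -> {ffun 'I_M -> F} =>
    ((- eps)%:E < limn_einf (fun n => ((lin_dev a n)%:~R / n%:R : R)%:E))%E /\
    (limn_einf (fun n => ((lin_dev a n)%:~R / n%:R : R)%:E)
       <= limn_esup (fun n => ((lin_dev a n)%:~R / n%:R : R)%:E))%E /\
    (limn_esup (fun n => ((lin_dev a n)%:~R / n%:R : R)%:E) < eps%:E)%E).
Proof.
pose t := (Num.truncn (2 / eps)).+1.
have eps_t : 2 <= eps * t%:R by rewrite mulrC -ler_pdivrMr // ltW // truncnS_gt.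
apply: (prod_null_io_prefix HM (B := fun n => [set p | deviant t p])).
  exact: deviant_tail_small.
move=> a not_bounded N; apply: contrapT => not_io; apply: not_bounded.
apply: (ratio_limits_within (N := N) Heps eps_t) => n leNn.
rewrite leqNgt; apply/negP => dev_n; apply: not_io; exists n => //.
by rewrite inE /deviant lin_dev_take_word.
Qed.
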